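(* Let $z\ge0$ be an integer. If an undirected multigraph $G$ has a $z$-antler $(C_1,F_1)$ and $G-(C_1\cup F_1)$ has a $z$-antler $(C_2,F_2)$, then $(C_1\cup C_2,\,F_1\cup F_2)$ is a $z$-antler in $G$.
   Context: A feedback vertex set (FVS) of $G$ is a set $X\subseteq V(G)$ with $G-X$ acyclic (self-loops and pairs of parallel edges count as cycles); $\mathrm{fvs}(G)$ is its minimum size. For disjoint $X,Y$, $e(X,Y)$ is the number of edges between $X$ and $Y$. A feedback vertex cut (FVC) in $G$ is a pair of disjoint sets $C,F\subseteq V(G)$ such that $G[F]$ is a forest and every tree $T$ of $G[F]$ satisfies $e(V(T),V(G)\setminus(C\cup F))\le1$. An antler is a FVC $(C,F)$ with $|C|\le\mathrm{fvs}(G[C\cup F])$. For $C\subseteq V(G)$, a $C$-certificate is a subgraph $H$ of $G$ such that $C$ is a minimum FVS of $H$; it has order $z$ if every component $H'$ of $H$ satisfies $\mathrm{fvs}(H')=|C\cap V(H')|\le z$. A $z$-antler is an antler $(C,F)$ such that $G[C\cup F]$ contains a $C$-certificate of order $z$. *)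

From Stdlib Require Import ClassicalEpsilon.
From mathcomp Require Import all_boot.

Set Implicit Arguments.
Unset Strict Implicit.
Unset Printing Implicit Defensive.

(* A (multi)graph lives inside vertex universe T and edge universe E; every edge
   e has two (unordered) ends [ends e]; e is a self-loop iff both ends coincide. Subgraphs share the same incidence function [ends]. *)
Record mgraph (T E : finType) := MG { gV : {set T}; gE : {set E} }.

Section MultiGraphs.
Variables (T E : finType) (ends : E -> T * T).

Definition wf (G : mgraph T E) : Prop :=
  forall e, e \in gE G -> (ends e).1 \in gV G /\ (ends e).2 \in gV G.

Definition joins (e : E) (x y : T) : bool :=
  (ends e == (x, y)) || (ends e == (y, x)).

Definition induced (G : mgraph T E) (S : {set T}) : mgraph T E :=
  MG (gV G :&: S) [set e in gE G | ((ends e).1 \in S) && ((ends e).2 \in S)].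

Definition del (G : mgraph T E) (X : {set T}) : mgraph T E := induced G (~: X).

(* A cycle: distinct vertices v_0..v_{k-1}, distinct edges e_0..e_{k-1} (k >= 1),
   e_i joining v_i and v_{i+1 mod k}.  k = 1: a self-loop; k = 2: two parallel edges. *)
Definition has_cycle (G : mgraph T E) : Prop :=
  exists (v0 : T) (vs : seq T) (e0 : E) (es : seq E),
    let vs' := v0 :: vs in let es' := e0 :: es in
    [/\ size vs = size es, uniq vs' && uniq es',
        all (fun v => v \in gV G) vs', all (fun e => e \in gE G) es' &
        forall i, i < size es' ->
          joins (nth e0 es' i) (nth v0 vs' i) (nth v0 vs' (i.+1 %% size es'))].

Definition acyclic (G : mgraph T E) : Prop := ~ has_cycle G.

Definition is_fvs (G : mgraph T E) (X : {set T}) : Prop :=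
  X \subset gV G /\ acyclic (del G X).

Definition is_fvsb (G : mgraph T E) (X : {set T}) : bool :=
  if excluded_middle_informative (is_fvs G X) then true else false.

(* fvs(G): minimum size of a FVS (V(G) itself is always one, so #|T| is a safe
   neutral element). *)
Definition fvs (G : mgraph T E) : nat :=
  \big[minn/#|T|]_(X : {set T} | is_fvsb G X) #|X|.

Definition adj (G : mgraph T E) : rel T :=
  fun x y => [exists e in gE G, joins e x y].

Definition comp (G : mgraph T E) (v : T) : {set T} :=
  [set u in gV G | connect (adj G) v u].

Definition is_component (G : mgraph T E) (K : {set T}) : Prop :=
  exists2 v, v \in gV G & K = comp G v.

Definition e_between (G : mgraph T E) (X Y : {set T}) : nat :=
  #|[set e in gE G | (((ends e).1 \in X) && ((ends e).2 \in Y))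
                     || (((ends e).1 \in Y) && ((ends e).2 \in X))]|.

Definition FVC (G : mgraph T E) (C F : {set T}) : Prop :=
  [/\ C \subset gV G, F \subset gV G, [disjoint C & F],
      acyclic (induced G F) &
      forall K, is_component (induced G F) K ->
        e_between G K (gV G :\: (C :|: F)) <= 1].

Definition antler (G : mgraph T E) (C F : {set T}) : Prop :=
  FVC G C F /\ #|C| <= fvs (induced G (C :|: F)).

Definition subgraph (H G : mgraph T E) : Prop :=
  [/\ gV H \subset gV G, gE H \subset gE G & wf H].

Definition certificate (G : mgraph T E) (C : {set T}) (H : mgraph T E) : Prop :=
  [/\ subgraph H G, is_fvs H C & forall X, is_fvs H X -> #|C| <= #|X|].

Definition cert_order (C : {set T}) (H : mgraph T E) (z : nat) : Prop :=
  forall K, is_component H K ->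
    fvs (induced H K) = #|C :&: K| /\ #|C :&: K| <= z.

Definition z_antler (G : mgraph T E) (z : nat) (C F : {set T}) : Prop :=
  antler G C F /\
  exists H, certificate (induced G (C :|: F)) C H /\ cert_order C H z.

End MultiGraphs.

(* A cycle of G[F1 ∪ F2] lies neither inside F1 nor inside F2 (both induce
   forests), so it crosses the boundary of some component of G[F1] twice; but
   such a component has at most one edge to V(G) - (C1 ∪ F1), which contains
   F2.  For the same reason a component of G[F1 ∪ F2] meeting F2 is one
   component of G[F2] with components of G[F1] hanging from it by their unique
   exit edge, so its edges leaving C ∪ F are those of that component of G[F2];
   a component avoiding F2 is a component of G[F1].  The certificates H1 and
   H2 live in disjoint vertex sets, and their union certifies C1 ∪ C2: a
   feedback vertex set of the union restricts to feedback vertex sets of H1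
   and H2, and its components are those of H1 and of H2. *)

From Pilot Require Import Defs.
From mathcomp Require Import all_boot zify.

Set Implicit Arguments.
Unset Strict Implicit.
Unset Printing Implicit Defensive.

Lemma connect_ind (T : finType) (r : rel T) (P : T -> Prop) x :
  P x -> (forall a b, connect r x a -> r a b -> P a -> P b) ->
  forall y, connect r x y -> P y.
Proof.
move=> Px step y /connectP [p]; elim/last_ind: p y => [|p b IHp] y; first by move=> _ ->.
rewrite rcons_path last_rcons => /andP[rp rb] ->.
have cxp : connect r x (last x p) by apply/connectP; exists p.
exact: step cxp rb (IHp _ rp erefl).
Qed.

Lemma exists_switch_mod (p : pred nat) k i j : i < k -> j < k -> p i -> ~~ p j ->
  exists2 l, l < k & p l && ~~ p (l.+1 %% k).
Proof.
move=> ik jk pi pj.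
case: (pickP (fun l : 'I_k => p l && ~~ p (l.+1 %% k))) => [l|no_switch].
  by exists l.
have k_gt0 : 0 < k by lia.
have p_from_i n : p ((i + n) %% k).
  elim: n => [|n IHn]; first by rewrite addn0 modn_small.
  have := no_switch (Ordinal (ltn_pmod (i + n) k_gt0)).
  by rewrite /= IHn /= -addn1 modnDml addn1 addnS => /negbFE.
move: (p_from_i (j + k - i)); rewrite (_ : i + (j + k - i) = j + k); last by lia.
by rewrite modnDr modn_small // (negbTE pj).
Qed.

Section Multigraphs.
Variables (T E : finType) (ends : E -> T * T).
Local Notation joins := (joins ends).
Local Notation induced := (induced ends).
Local Notation del := (del ends).
Local Notation has_cycle := (has_cycle ends).
Local Notation acyclic := (acyclic ends).
Local Notation adj := (adj ends).
Local Notation comp := (Defs.comp ends).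
Local Notation is_component := (is_component ends).
Local Notation e_between := (e_between ends).
Local Notation wf := (wf ends).
Local Notation FVC := (FVC ends).
Local Notation is_fvs := (is_fvs ends).
Local Notation fvs := (fvs ends).
Local Notation certificate := (certificate ends).
Local Notation cert_order := (cert_order ends).

Implicit Types (G A B H : mgraph T E) (S X Y Z K C : {set T}).

Lemma joinsC e x y : joins e x y = joins e y x.
Proof. by rewrite /Defs.joins orbC. Qed.

Lemma joins_in e x y S : joins e x y ->
  ((ends e).1 \in S) && ((ends e).2 \in S) = (x \in S) && (y \in S).
Proof. by rewrite /Defs.joins => /orP[] /eqP ->; rewrite // andbC. Qed.

Lemma joins_other e x y x' y' : joins e x y -> joins e x' y' -> y' = x \/ y' = y.
Proof. by rewrite /Defs.joins => /orP[] /eqP -> /orP[] /eqP [] -> ->; auto. Qed.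

Lemma wf_joins G e x y : wf G -> e \in gE G -> joins e x y ->
  (x \in gV G) && (y \in gV G).
Proof. by move=> wG /wG [e1 e2] /joins_in <-; rewrite e1 e2. Qed.

Lemma induced_del G Z S : [disjoint S & Z] -> induced (del G Z) S = induced G S.
Proof.
move=> dSZ; have notZ x : x \in S -> (x \notin Z) = true by move/(disjointFr dSZ)->.
congr MG; [apply/setP => x|apply/setP => e]; rewrite !inE.
  by case: (boolP (x \in S)) => xS; rewrite ?andbF ?notZ ?andbT.
case: (boolP ((ends e).1 \in S)) => e1S; case: (boolP ((ends e).2 \in S)) => e2S;
  by rewrite ?andbF ?notZ ?andbT.
Qed.

Definition edges_between G X Y : {set E} :=
  [set e in gE G | (((ends e).1 \in X) && ((ends e).2 \in Y))
                   || (((ends e).1 \in Y) && ((ends e).2 \in X))].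

Lemma e_betweenE G X Y : e_between G X Y = #|edges_between G X Y|.
Proof. by []. Qed.

Lemma edges_betweenP G X Y e :
  reflect (exists x y, [/\ e \in gE G, joins e x y, x \in X & y \in Y])
          (e \in edges_between G X Y).
Proof.
have joins_ends : joins e (ends e).1 (ends e).2.
  by rewrite /Defs.joins -surjective_pairing eqxx.
rewrite inE; apply: (iffP andP) => [[eG /orP[] /andP[e1 e2]]|[x [y [eG j xX yY]]]].
- by exists (ends e).1, (ends e).2.
- by exists (ends e).2, (ends e).1; rewrite joinsC.
- by split=> //; move: j; rewrite /Defs.joins => /orP[] /eqP -> /=; rewrite xX yY ?orbT.
Qed.

Lemma edges_betweenS G X Y X' Y' : X \subset X' -> Y \subset Y' ->
  edges_between G X Y \subset edges_between G X' Y'.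
Proof.
move=> /subsetP sX /subsetP sY; apply/subsetP => e.
by case/edges_betweenP => [x [y [eG j /sX xX /sY yY]]]; apply/edges_betweenP; exists x, y.
Qed.

Lemma edges_between_del G Z X Y : [disjoint X :|: Y & Z] ->
  edges_between (del G Z) X Y = edges_between G X Y.
Proof.
move=> dZ; apply/setP => e; apply/edges_betweenP/edges_betweenP => -[x [y [eG j xX yY]]];
  exists x, y; split=> //; move: eG; rewrite inE; first by case/andP.
by move=> ->; rewrite (joins_in _ j) !inE !(disjointFr dZ) // inE ?xX ?yY ?orbT.
Qed.

Lemma edges_between_le1 G X Y e e' : e_between G X Y <= 1 ->
  e \in edges_between G X Y -> e' \in edges_between G X Y -> e = e'.
Proof. by move=> /card_le1_eqP le1 eXY e'XY; apply: le1. Qed.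

Definition is_cycle A v0 vs e0 es : Prop :=
  let vs' := v0 :: vs in let es' := e0 :: es in
  [/\ size vs = size es, uniq vs' && uniq es',
      all (fun v => v \in gV A) vs', all (fun e => e \in gE A) es' &
      forall i, i < size es' ->
        joins (nth e0 es' i) (nth v0 vs' i) (nth v0 vs' (i.+1 %% size es'))].

Lemma has_cycleP A : has_cycle A <-> exists v0 vs e0 es, is_cycle A v0 vs e0 es.
Proof. by []. Qed.

Section Cycle.
Variables (A : mgraph T E) (v0 : T) (vs : seq T) (e0 : E) (es : seq E).
Hypothesis cycA : is_cycle A v0 vs e0 es.

Lemma cycle_vertices : {subset v0 :: vs <= gV A}.
Proof. by case: cycA => _ _ /allP. Qed.

Lemma cycle_edges : {subset e0 :: es <= gE A}.
Proof. by case: cycA => _ _ _ /allP. Qed.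

Lemma cycle_edge_ends e : e \in e0 :: es ->
  exists x y, [/\ joins e x y, x \in v0 :: vs & y \in v0 :: vs].
Proof.
case: cycA => sz _ _ _ hj ein; set i := index e (e0 :: es).
have i_lt : i < size (e0 :: es) by rewrite index_mem.
have size_vs : size (v0 :: vs) = size (e0 :: es) by rewrite /= sz.
exists (nth v0 (v0 :: vs) i), (nth v0 (v0 :: vs) (i.+1 %% size (e0 :: es))).
split; first by have := hj _ i_lt; rewrite nth_index.
  by apply: mem_nth; rewrite size_vs.
by apply: mem_nth; rewrite size_vs ltn_pmod.
Qed.

Lemma has_cycle_sub B : {subset v0 :: vs <= gV B} -> {subset e0 :: es <= gE B} ->
  has_cycle B.
Proof.
case: cycA => sz uniq_ves _ _ hj sV sE.
by exists v0, vs, e0, es; split=> //; apply/allP.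
Qed.

Lemma has_cycle_induced G S : gV A \subset gV G -> gE A \subset gE G ->
  {subset v0 :: vs <= S} -> has_cycle (induced G S).
Proof.
move=> /subsetP sV /subsetP sE inS; apply: has_cycle_sub => [v vc|e ec].
  by rewrite inE sV ?inS ?cycle_vertices.
have [x [y [j xc yc]]] := cycle_edge_ends ec.
by rewrite inE sE ?cycle_edges //= (joins_in _ j) !inS.
Qed.

Lemma cycle_crossing_edges S a b : a \in v0 :: vs -> a \in S ->
  b \in v0 :: vs -> b \notin S -> 1 < e_between A S (gV A :\: S).
Proof.
case: cycA => sz /andP[_ uniq_es] _ _ hj ac aS bc bS.
set es' := e0 :: es in uniq_es hj; set k := size es'.
have size_vs : size (v0 :: vs) = k by rewrite /k /= sz.
pose v i := nth v0 (v0 :: vs) i; pose p i := v i \in S.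
have ia : index a (v0 :: vs) < k by rewrite -size_vs index_mem.
have ib : index b (v0 :: vs) < k by rewrite -size_vs index_mem.
have pa : p (index a (v0 :: vs)) by rewrite /p /v nth_index.
have pb : ~~ p (index b (v0 :: vs)) by rewrite /p /v nth_index.
have [i ik /andP[pi pi1]] := exists_switch_mod ia ib pa pb.
have [j jk /andP[pj /negPn pj1]] :=
  exists_switch_mod (p := predC p) ib ia pb (negbT (negbF pa)).
have v_in l : l < k -> v l \in gV A.
  by move=> lk; apply: cycle_vertices; apply: mem_nth; rewrite size_vs.
have e_in l : l < k -> nth e0 es' l \in gE A.
  by move=> lk; apply: cycle_edges; apply: mem_nth.
have k_gt0 : 0 < k by [].
have e_i : nth e0 es' i \in edges_between A S (gV A :\: S).
  apply/edges_betweenP; exists (v i), (v (i.+1 %% k)).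
  by rewrite !inE e_in ?hj ?v_in ?ltn_pmod //; split=> //; rewrite andbT.
have e_j : nth e0 es' j \in edges_between A S (gV A :\: S).
  apply/edges_betweenP; exists (v (j.+1 %% k)), (v j).
  by rewrite !inE joinsC e_in ?hj ?v_in ?ltn_pmod //; split=> //; rewrite andbT.
have e_ij : nth e0 es' i != nth e0 es' j.
  by rewrite nth_uniq //; apply: contraTneq pi => ->.
have <- : #|[set nth e0 es' i; nth e0 es' j]| = 2 by rewrite cards2 e_ij.
rewrite e_betweenE; apply: subset_leq_card.
by apply/subsetP => e /set2P[] ->.
Qed.

End Cycle.

Lemma has_cycle_mono A B : gV A \subset gV B -> gE A \subset gE B ->
  has_cycle A -> has_cycle B.
Proof.
move=> /subsetP sV /subsetP sE /has_cycleP [v0 [vs [e0 [es cycA]]]].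
by apply: (has_cycle_sub cycA) => [v /(cycle_vertices cycA)/sV|e /(cycle_edges cycA)/sE].
Qed.

Lemma adjP G x y : reflect (exists2 e, e \in gE G & joins e x y) (adj G x y).
Proof.
by apply: (iffP existsP) => [[e /andP[]]|[e eG j]]; exists e => //; rewrite eG.
Qed.

Lemma adj_sym G : symmetric (adj G).
Proof.
by move=> x y; apply/adjP/adjP => -[e eG j]; exists e; rewrite // joinsC.
Qed.

Lemma adj_induced G S x y :
  adj (induced G S) x y = [&& adj G x y, x \in S & y \in S].
Proof.
apply/adjP/and3P => [[e]|[/adjP[e eG j] xS yS]].
  rewrite inE => /andP[eG eS] j; move: eS; rewrite (joins_in _ j) => /andP[xS yS].
  by split=> //; apply/adjP; exists e.
by exists e; rewrite // inE eG (joins_in _ j) xS yS.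
Qed.

Lemma comp_connect G v u : u \in comp G v -> connect (adj G) v u.
Proof. by rewrite inE => /andP[]. Qed.

Lemma comp_refl G v : v \in gV G -> v \in comp G v.
Proof. by rewrite inE connect0 andbT. Qed.

Lemma is_component_comp G v : v \in gV G -> is_component G (comp G v).
Proof. by exists v. Qed.

Lemma comp_eq G u v : u \in comp G v -> comp G u = comp G v.
Proof.
move=> /comp_connect cvu; apply/setP => x; rewrite !inE.
by rewrite (same_connect (sym_connect_sym (adj_sym G)) cvu).
Qed.

Lemma mem_comp_induced G S u x : x \in comp (induced G S) u -> x \in S.
Proof. by rewrite !inE => /andP[/andP[]]. Qed.

Lemma comp_induced_step G S u e x y : x \in comp (induced G S) u ->
  e \in gE G -> joins e x y -> y \in gV G -> y \in S -> y \in comp (induced G S) u.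
Proof.
move=> xK eG j yV yS; rewrite inE inE yV yS /=.
apply: connect_trans (comp_connect xK) (connect1 _).
by rewrite adj_induced (mem_comp_induced xK) yS !andbT; apply/adjP; exists e.
Qed.

Section ComposeFVC.
Variables (G : mgraph T E) (C1 F1 C2 F2 : {set T}).
Let R1 := gV G :\: (C1 :|: F1).
Let R := gV G :\: ((C1 :|: C2) :|: (F1 :|: F2)).
Let A := induced G (F1 :|: F2).
Let K1 := comp (induced G F1).
Let K2 := comp (induced G F2).
Hypothesis F1_sub : F1 \subset gV G.
Hypothesis acyclic1 : acyclic (induced G F1).
Hypothesis exits1 : forall K, is_component (induced G F1) K -> e_between G K R1 <= 1.
Hypothesis F2_sub : F2 \subset R1.
Hypothesis acyclic2 : acyclic (induced G F2).
Hypothesis exits2 : forall K, is_component (induced G F2) K -> e_between G K R <= 1.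

Let F2_R1 x : x \in F2 -> x \in R1. Proof. exact: subsetP F2_sub x. Qed.

Let F1_notF2 x : x \in F1 -> x \notin F2.
Proof. by move=> xF1; apply/negP => /F2_R1; rewrite !inE xF1 orbT. Qed.

Let R_sub_R1 : R \subset R1.
Proof. by apply: setDS; apply: setUSS; apply: subsetUl. Qed.

Let K1_refl u : u \in F1 -> u \in K1 u.
Proof. by move=> uF1; apply: comp_refl; rewrite inE (subsetP F1_sub). Qed.

Let K1_step u e x y : x \in K1 u -> e \in gE G -> joins e x y -> y \in F1 -> y \in K1 u.
Proof.
by move=> xK eG j yF1; apply: comp_induced_step xK eG j (subsetP F1_sub y yF1) yF1.
Qed.

Let K1_component u : u \in F1 -> is_component (induced G F1) (K1 u).
Proof. by move=> uF1; apply: is_component_comp; rewrite inE uF1 (subsetP F1_sub). Qed.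

Let K1_exit_unique u e e' : u \in F1 ->
  e \in edges_between G (K1 u) R1 -> e' \in edges_between G (K1 u) R1 -> e = e'.
Proof. by move=> /K1_component /exits1; apply: edges_between_le1. Qed.

Lemma acyclic_compose : acyclic A.
Proof.
move=> /has_cycleP [v0 [vs [e0 [es cycA]]]].
have sVA : gV A \subset gV G by apply: subsetIl.
have sEA : gE A \subset gE G by apply/subsetP => e; rewrite inE => /andP[].
case: (boolP (all (fun v => v \in F1) (v0 :: vs))) => [/allP inF1|/allPn [b bc bF1]].
  exact: acyclic1 (has_cycle_induced cycA sVA sEA inF1).
case: (boolP (all (fun v => v \in F2) (v0 :: vs))) => [/allP inF2|/allPn [a ac aF2]].
  exact: acyclic2 (has_cycle_induced cycA sVA sEA inF2).
have aF1 : a \in F1.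
  by have := cycle_vertices cycA ac; rewrite !inE (negbTE aF2) orbF => /andP[].
have bK : b \notin K1 a by apply/negP => /mem_comp_induced; apply/negP.
have := cycle_crossing_edges cycA ac (K1_refl aF1) bc bK; rewrite ltnNge => /negP; apply.
apply: (leq_trans _ (exits1 (K1_component aF1))); rewrite !e_betweenE.
apply: subset_leq_card; apply/subsetP => e.
case/edges_betweenP => [x [y [eA j xK /setDP[/setIP[_ yF] yK]]]].
apply/edges_betweenP; exists x, y; split=> //; first exact: (subsetP sEA).
case/setUP: yF => [yF1|/F2_R1 //].
by rewrite (K1_step xK (subsetP sEA e eA) j yF1) in yK.
Qed.

(* A walk of [G[F1 :|: F2]] from [F2] that enters a component of [G[F1]] must
   leave it through the same edge, as that component has a single exit. *)
Lemma reach_from_F2 w u : w \in F2 -> connect (adj A) w u ->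
  u \in K2 w \/
  (u \in F1 /\ exists e x y, [/\ e \in gE G, joins e x y, x \in K1 u & y \in K2 w]).
Proof.
move=> wF2; move: u; apply: connect_ind => [|a b _].
  by left; apply: comp_refl; rewrite inE wF2 andbT; case/setDP: (F2_R1 wF2).
rewrite adj_induced => /and3P[/adjP[e eG j] _ bF].
have bV : b \in gV G by case/setUP: bF => [/(subsetP F1_sub)|/F2_R1 /setDP[]].
case=> [aK2|[aF1 [e' [x' [y' [e'G j' x'K y'K]]]]]]; case/setUP: bF => [bF1|bF2].
- right; split=> //; exists e, b, a; split=> //; first by rewrite joinsC.
  exact: K1_refl.
- by left; apply: comp_induced_step aK2 eG j bV bF2.
- right; split=> //; exists e', x', y'; split=> //.
  by rewrite /K1 (comp_eq (K1_step (K1_refl aF1) eG j bF1)).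
- have ee' : e = e'.
    apply: (K1_exit_unique aF1); apply/edges_betweenP.
      by exists a, b; split; rewrite ?K1_refl ?F2_R1.
    by exists x', y'; split; rewrite ?F2_R1 ?(mem_comp_induced y'K).
  subst e'; case: (joins_other j' j) => [bx'|->]; last by left.
  by move: (mem_comp_induced x'K); rewrite -bx' => /F1_notF2; rewrite bF2.
Qed.

Lemma exits_from_F2 w : w \in F2 ->
  edges_between G (comp A w) R \subset edges_between G (K2 w) R.
Proof.
move=> wF2; apply/subsetP => e /edges_betweenP [x [y [eG j xK yR]]].
have [yF1 yF2] : y \notin F1 /\ y \notin F2.
  by case/setDP: yR => _; rewrite !inE !negb_or => /andP[_ /andP[-> ->]].
case: (reach_from_F2 wF2 (comp_connect xK)) => [xK2|[xF1 [e' [x' [y' [e'G j' x'K y'K]]]]]].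
  by apply/edges_betweenP; exists x, y.
have ee' : e = e'.
  apply: (K1_exit_unique xF1); apply/edges_betweenP.
    by exists x, y; split; rewrite ?K1_refl ?(subsetP R_sub_R1).
  by exists x', y'; split; rewrite ?F2_R1 ?(mem_comp_induced y'K).
subst e'; case: (joins_other j' j) => yE; [move: yF1 | move: yF2]; rewrite yE.
  by rewrite (mem_comp_induced x'K).
by rewrite (mem_comp_induced y'K).
Qed.

Lemma comp_sub_K1 v : v \in F1 -> (forall u, connect (adj A) v u -> u \notin F2) ->
  comp A v \subset K1 v.
Proof.
move=> vF1 noF2; apply/subsetP => u /comp_connect; move: u.
apply: connect_ind => [|a b cva ab].
  exact: K1_refl.
move: (ab); rewrite adj_induced => /and3P[/adjP[e eG j] _ bF] aK; apply: K1_step aK eG j _.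
by move: bF; rewrite inE (negbTE (noF2 b (connect_trans cva (connect1 ab)))) orbF.
Qed.

Lemma exits_compose K : is_component A K -> e_between G K R <= 1.
Proof.
case=> v vA ->; rewrite e_betweenE.
case: (pickP (fun w => connect (adj A) v w && (w \in F2))) => [w /andP[cvw wF2]|noF2].
  have wV : w \in gV G by case/setDP: (F2_R1 wF2).
  have wK : w \in comp A v by rewrite inE cvw !inE wV wF2 orbT.
  rewrite -(comp_eq wK); apply: leq_trans (subset_leq_card (exits_from_F2 wF2)) _.
  by apply: exits2; apply: is_component_comp; rewrite inE wV.
have noF2' u : connect (adj A) v u -> u \notin F2.
  by move=> cvu; move: (noF2 u); rewrite cvu /= => ->.
have vF1 : v \in F1.
  by move: vA; rewrite !inE (negbTE (noF2' v (connect0 _ _))) orbF => /andP[].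
apply: (leq_trans _ (exits1 (K1_component vF1))).
rewrite e_betweenE; apply: subset_leq_card.
exact: edges_betweenS (comp_sub_K1 vF1 noF2') R_sub_R1.
Qed.

End ComposeFVC.

Lemma FVC_sub G C F : FVC G C F -> C :|: F \subset gV G.
Proof. by case=> CG FG _ _ _; rewrite subUset CG. Qed.

Lemma FVC_compose G C1 F1 C2 F2 :
  FVC G C1 F1 -> FVC (del G (C1 :|: F1)) C2 F2 -> FVC G (C1 :|: C2) (F1 :|: F2).
Proof.
set X := C1 :|: F1 => -[C1G F1G dCF1 acyclic1 exits1] [C2G2 F2G2 dCF2 acyclic2 exits2].
have G2_sub : gV (del G X) \subset gV G :\: X by rewrite setDE.
have outX S : S \subset gV (del G X) -> [disjoint S & X].
  by move=> SG2; rewrite disjoints_subset; apply: subset_trans SG2 (subsetIr _ _).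
have dF2 := outX _ F2G2; have dC2 := outX _ C2G2.
rewrite induced_del // in acyclic2 exits2.
have exits2' K : is_component (induced G F2) K ->
    e_between G K (gV G :\: ((C1 :|: C2) :|: (F1 :|: F2))) <= 1.
  move=> K2; have dK : [disjoint K :|: (gV (del G X) :\: (C2 :|: F2)) & X].
    apply: outX; rewrite subUset subsetDl andbT.
    case: K2 => v _ ->; apply/subsetP => x /mem_comp_induced; exact: subsetP F2G2 x.
  have := exits2 K K2; rewrite !e_betweenE (edges_between_del _ dK).
  congr (#|edges_between _ _ _| <= _); apply/setP => x; rewrite !inE.
  by case: (x \in gV G); case: (x \in C1); case: (x \in C2); case: (x \in F1);
    case: (x \in F2).
have dC1F2 : [disjoint C1 & F2] by rewrite disjoint_sym (disjointWr (subsetUl _ _) dF2).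
have dC2F1 : [disjoint C2 & F1] by rewrite (disjointWr (subsetUr _ _) dC2).
split.
- by rewrite subUset C1G (subset_trans C2G2) ?subsetIl.
- by rewrite subUset F1G (subset_trans F2G2) ?subsetIl.
- by rewrite -setI_eq0 setIUl !setIUr !disjoint_setI0 // !setU0.
- exact: acyclic_compose F1G acyclic1 exits1 (subset_trans F2G2 G2_sub) acyclic2.
- exact: exits_compose F1G exits1 (subset_trans F2G2 G2_sub) exits2'.
Qed.

Lemma fvs_restrict H H' X : wf H' -> gV H' \subset gV H -> gE H' \subset gE H ->
  is_fvs H X -> is_fvs H' (X :&: gV H').
Proof.
move=> wfH' /subsetP sV /subsetP sE [_ acyc]; split; first exact: subsetIr.
move=> cyc; apply: acyc; apply: (has_cycle_mono _ _ cyc);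
  [apply/subsetP => v|apply/subsetP => e]; rewrite !inE.
  by case/andP=> vH'; rewrite vH' andbT sV.
case/andP=> eH' /andP[]; have [e1 e2] := wfH' e eH'.
by rewrite sE // e1 e2 !andbT => -> ->.
Qed.

Lemma certificate_card_fvs G C H : certificate G C H -> #|C| <= fvs G.
Proof.
case=> [[sV sE wfH] _ minC]; apply: (big_ind (fun m => #|C| <= m)) => [|m n Cm Cn|X].
- exact: max_card.
- by rewrite leq_min Cm.
- rewrite /is_fvsb; case: ClassicalEpsilon.excluded_middle_informative => // fvsX _.
  exact: leq_trans (minC _ (fvs_restrict wfH sV sE fvsX)) (subset_leq_card (subsetIl _ _)).
Qed.

Lemma certificate_induced_sub G S S' C H : S \subset S' ->
  certificate (induced G S) C H -> certificate (induced G S') C H.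
Proof.
move=> /subsetP sS [[sV sE wfH] fvsC minC]; split=> //; split=> //.
  by apply: subset_trans sV _; apply: setIS; apply/subsetP.
apply: subset_trans sE _; apply/subsetP => e; rewrite !inE => /andP[-> /andP[e1 e2]].
by rewrite !sS.
Qed.

Definition gunion (H1 H2 : mgraph T E) : mgraph T E :=
  MG (gV H1 :|: gV H2) (gE H1 :|: gE H2).

Lemma gunionC H1 H2 : gunion H1 H2 = gunion H2 H1.
Proof. by rewrite /gunion setUC [gE H1 :|: _]setUC. Qed.

Section DisjointUnion.
Variables H1 H2 : mgraph T E.
Hypotheses (wf1 : wf H1) (wf2 : wf H2) (dH : [disjoint gV H1 & gV H2]).
Let H := gunion H1 H2.

Lemma wf_gunion : wf H.
Proof. by move=> e; rewrite !inE => /orP[/wf1|/wf2] [-> ->]; rewrite ?orbT. Qed.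

Lemma gunion_edge_l e x y : e \in gE H -> joins e x y -> x \in gV H1 ->
  (e \in gE H1) && (y \in gV H1).
Proof.
rewrite inE => /orP[eH1|eH2] j xH1; first by rewrite eH1; case/andP: (wf_joins wf1 eH1 j).
by case/andP: (wf_joins wf2 eH2 j); rewrite (disjointFr dH xH1).
Qed.

Lemma comp_gunion_l v : v \in gV H1 -> comp H v = comp H1 v.
Proof.
move=> vH1; apply/setP => u; rewrite !inE; apply/andP/andP => -[uV cvu].
  move: u cvu {uV}; apply: connect_ind => [|a b _ /adjP[e eH j] [aH1 cva]].
    by rewrite vH1 connect0.
  case/andP: (gunion_edge_l eH j aH1) => eH1 ->; split=> //.
  by apply: connect_trans cva (connect1 _); apply/adjP; exists e.
split; first by rewrite uV.
apply: connect_sub cvu => a b /adjP[e eH1 j]; apply: connect1; apply/adjP.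
by exists e; rewrite // inE eH1.
Qed.

Lemma induced_gunion_l K : K \subset gV H1 -> induced H K = induced H1 K.
Proof.
move=> /subsetP KH1; congr MG; [apply/setP => x|apply/setP => e]; rewrite !inE.
  by case: (boolP (x \in K)) => xK; rewrite ?andbF ?KH1.
case: (boolP (e \in gE H1)) => //= eH1; apply/negP => /andP[eH2 /andP[e1K _]].
by have [e1 _] := wf2 eH2; rewrite (disjointFr dH (KH1 _ e1K)) in e1.
Qed.

Lemma cycle_gunion_l X X1 v0 vs e0 es : is_cycle (del H X) v0 vs e0 es ->
  X1 \subset X -> {subset v0 :: vs <= gV H1} -> has_cycle (del H1 X1).
Proof.
move=> cyc X1X inH1; have /subsetP sC : ~: X \subset ~: X1 by rewrite setCS.
apply: (has_cycle_sub cyc) => [v vc|e ec].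
  by have /setIP[_ /sC vX1] := cycle_vertices cyc vc; rewrite inE inH1.
have [x [y [j xc _]]] := cycle_edge_ends cyc ec.
have := cycle_edges cyc ec; rewrite inE => /andP[eH /andP[e1 e2]].
by case/andP: (gunion_edge_l eH j (inH1 _ xc)) => eH1 _; rewrite inE eH1 !sC.
Qed.

Lemma cert_order_gunion_l (C1 C2 : {set T}) z v : C2 \subset gV H2 -> cert_order C1 H1 z ->
  v \in gV H1 ->
  fvs (induced H (comp H v)) = #|(C1 :|: C2) :&: comp H v| /\
  #|(C1 :|: C2) :&: comp H v| <= z.
Proof.
move=> C2H2 ord1 vH1; have KH1 : comp H1 v \subset gV H1.
  by apply/subsetP => u; rewrite inE => /andP[].
rewrite comp_gunion_l // induced_gunion_l //.
have -> : (C1 :|: C2) :&: comp H1 v = C1 :&: comp H1 v.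
  rewrite setIUl (_ : C2 :&: _ = set0) ?setU0 //; apply/eqP; rewrite setI_eq0.
  by apply: disjointW C2H2 KH1 _; rewrite disjoint_sym.
by apply: ord1; exists v.
Qed.

End DisjointUnion.

Lemma acyclic_gunion H1 H2 X1 X2 : wf H1 -> wf H2 -> [disjoint gV H1 & gV H2] ->
  acyclic (del H1 X1) -> acyclic (del H2 X2) -> acyclic (del (gunion H1 H2) (X1 :|: X2)).
Proof.
move=> wf1 wf2 dH acyc1 acyc2 /has_cycleP [v0 [vs [e0 [es cyc]]]].
case: (boolP (all (fun v => v \in gV H1) (v0 :: vs))) => [/allP inH1|/allPn [b bc bH1]].
  exact: acyc1 (cycle_gunion_l wf1 wf2 dH cyc (subsetUl _ _) inH1).
case: (boolP (all (fun v => v \in gV H2) (v0 :: vs))) => [/allP inH2|/allPn [a ac aH2]].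
  rewrite gunionC setUC disjoint_sym in cyc dH.
  exact: acyc2 (cycle_gunion_l wf2 wf1 dH cyc (subsetUl _ _) inH2).
have aH1 : a \in gV H1.
  by move: (cycle_vertices cyc ac); rewrite !inE (negbTE aH2) orbF => /andP[].
have /ltnW /card_gt0P [e] := cycle_crossing_edges cyc ac aH1 bc bH1.
case/edges_betweenP => [x [y [eH j xH1 /setDP[_ yH1]]]].
move: eH; rewrite inE => /andP[eH _].
by case/andP: (gunion_edge_l wf1 wf2 dH eH j xH1) => _; rewrite (negbTE yH1).
Qed.

Lemma certificate_gunion G C1 C2 H1 H2 : [disjoint gV H1 & gV H2] ->
  certificate G C1 H1 -> certificate G C2 H2 -> certificate G (C1 :|: C2) (gunion H1 H2).
Proof.
move=> dH [[V1 E1 wf1] [C1H1 acyc1] min1] [[V2 E2 wf2] [C2H2 acyc2] min2].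
split; [split | split | move=> X fvsX].
- by rewrite subUset V1 V2.
- by rewrite subUset E1 E2.
- exact: wf_gunion.
- exact: setUSS.
- exact: acyclic_gunion.
have m1 := min1 _ (fvs_restrict (H := gunion H1 H2) wf1 (subsetUl _ _) (subsetUl _ _) fvsX).
have m2 := min2 _ (fvs_restrict (H := gunion H1 H2) wf2 (subsetUr _ _) (subsetUr _ _) fvsX).
have X2 : #|X :&: gV H2| <= #|X :\: gV H1|.
  apply: subset_leq_card; apply/subsetP => x /setIP[xX xH2].
  by rewrite inE xX (disjointFl dH xH2).
rewrite -(cardsID (gV H1) X); apply: (@leq_trans (#|C1| + #|C2|)).
  by rewrite cardsU leq_subr.
exact: leq_add m1 (leq_trans m2 X2).
Qed.

Lemma cert_order_gunion H1 H2 C1 C2 z : wf H1 -> wf H2 -> [disjoint gV H1 & gV H2] ->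
  C1 \subset gV H1 -> C2 \subset gV H2 ->
  cert_order C1 H1 z -> cert_order C2 H2 z -> cert_order (C1 :|: C2) (gunion H1 H2) z.
Proof.
move=> wf1 wf2 dH C1H1 C2H2 ord1 ord2 K [v]; rewrite inE => /orP[vH1|vH2] ->.
  exact: cert_order_gunion_l.
rewrite gunionC setUC; rewrite disjoint_sym in dH; exact: cert_order_gunion_l.
Qed.

End Multigraphs.

Theorem lemma12 (T E : finType) (ends : E -> T * T) (G : mgraph T E) (z : nat)
    (C1 F1 C2 F2 : {set T}) :
  wf ends G ->
  z_antler ends G z C1 F1 ->
  z_antler ends (del ends G (C1 :|: F1)) z C2 F2 ->
  z_antler ends G z (C1 :|: C2) (F1 :|: F2).
Proof.
move=> _ [[fvc1 _] [H1 [cert1 ord1]]] [[fvc2 _] [H2 [cert2 ord2]]].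
have dCF : [disjoint C2 :|: F2 & C1 :|: F1].
  by rewrite disjoints_subset; apply: subset_trans (FVC_sub fvc2) (subsetIr _ _).
rewrite induced_del // in cert2.
have [[H1G _ wf1] [C1H1 _] _] := cert1; have [[H2G _ wf2] [C2H2 _] _] := cert2.
have dH : [disjoint gV H1 & gV H2].
  rewrite disjoint_sym; apply: disjointW dCF; apply: subset_trans (subsetIr _ _).
    exact: H2G.
  exact: H1G.
have sub1 : C1 :|: F1 \subset (C1 :|: C2) :|: (F1 :|: F2) by rewrite setUACA subsetUl.
have sub2 : C2 :|: F2 \subset (C1 :|: C2) :|: (F1 :|: F2) by rewrite setUACA subsetUr.
have cert := certificate_gunion dH (certificate_induced_sub sub1 cert1)
                                   (certificate_induced_sub sub2 cert2).
split; first split.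
- exact: FVC_compose.
- exact: certificate_card_fvs cert.
by exists (gunion H1 H2); split; last exact: cert_order_gunion.
Qed.
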